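(* For any $n,T\in\mathbb{N}$ and $\epsilon>0$, the exponential projected walk algorithm $\mathrm{EPW}(T,\epsilon)$ is an $\epsilon$-differentially private prediction algorithm.
   Context: Let $N\in\mathbb{N}$, $[N]=\{1,\dots,N\}$. For $A\le B$, $\mathrm{proj}_{[A,B]}(u)$ denotes the projection of $u\in\mathbb{R}$ onto $[A,B]$. The algorithm $\mathrm{EPW}(T,\epsilon)$ takes a dataset $S=((x_1,y_1),\dots,(x_n,y_n))\in([N]\times\{0,1\})^n$, arranged in sorted order $x_1\le x_2\le\dots\le x_n$, and a query point $x\in[N]$. Let $t$ be the number of examples with $x_i\le x$. Set $v_0=0$ and for $i=1,\dots,t$ set $v_i=\mathrm{proj}_{[-T,T]}(v_{i-1}+(2y_i-1))$. Output $b=1$ with probability $\frac{e^{\epsilon v_t/2}}{1+e^{\epsilon v_t/2}}$ and $b=0$ otherwise. A prediction algorithm $M$ is an $\epsilon$-differentially private prediction algorithm if for every query point $x$, for all datasets $S,S'$ differing in a single element and every $b$, $\Pr[M(S,x)=b]\le e^{\epsilon}\Pr[M(S',x)=b]$. *)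

From HB Require Import structures.
From mathcomp Require Import all_boot all_order all_algebra.
From mathcomp Require Import all_classical all_reals.
From mathcomp Require Import sequences exp.
Set Implicit Arguments. Unset Strict Implicit. Unset Printing Implicit Defensive.
Import Order.TTheory GRing.Theory Num.Theory.
Local Open Scope ring_scope.

Definition projT (T : nat) (u : int) : int :=
  Num.max (- (T%:Z)) (Num.min (T%:Z) u).

Definition walk (T : nat) (ys : seq bool) : int :=
  foldl (fun v (y : bool) => projT T (v + (2 * (y : nat)%:Z - 1))) 0 ys.

Definition sorted_data (S : seq (nat * bool)) : seq (nat * bool) :=
  sort (fun p q : nat * bool => (p.1 <= q.1)%N) S.

Definition epw_value (T : nat) (S : seq (nat * bool)) (x : nat) : int :=
  let t := count (fun p : nat * bool => (p.1 <= x)%N) S in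
  walk T [seq p.2 | p <- take t (sorted_data S)].

(* Pr[EPW(T,eps)(S,x) = b] *)
Definition epw_prob (R : realType) (T : nat) (eps : R)
    (S : seq (nat * bool)) (x : nat) (b : bool) : R :=
  let e := expR (eps * (epw_value T S x)%:~R / 2) in
  if b then e / (1 + e) else 1 - e / (1 + e).

Definition dataset (N n : nat) (S : seq (nat * bool)) : Prop :=
  size S = n /\ all (fun p : nat * bool => (1 <= p.1 <= N)%N) S.

Definition neighbors (S S' : seq (nat * bool)) : Prop :=
  size S = size S' /\
  exists i, forall j, j != i -> nth (0%N, false) S j = nth (0%N, false) S' j.

(* The released value v_t is a projected walk over the labels of the sorted
   points x_i <= x.  Changing one element of the dataset deletes one label from
   that sequence and inserts another.  Projection onto [-T, T] is 1-Lipschitz,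
   so two walks started at most 1 apart stay at most 1 apart; hence inserting a
   single step moves the final value by at most 1, and changing one element
   moves v_t by at most 2.  The output is a logistic coin with parameter
   eps v_t / 2, and a shift of the logistic argument by at most eps changes
   each outcome probability by a factor at most e^eps. *)

From HB Require Import structures.
From mathcomp Require Import all_boot all_order all_algebra.
From mathcomp Require Import all_classical all_reals.
From mathcomp Require Import sequences exp.
From mathcomp Require Import zify ring lra.
Set Implicit Arguments. Unset Strict Implicit. Unset Printing Implicit Defensive.
Import Order.TTheory GRing.Theory Num.Theory.
Local Open Scope ring_scope.

Section ProjectedWalk.

Variable T : nat.

Definition walk_step (v : int) (y : bool) : int :=
  projT T (v + (2 * (y : nat)%:Z - 1)).

Lemma projT_lipschitz (a b : int) : `|projT T a - projT T b| <= `|a - b|.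
Proof. rewrite /projT; lia. Qed.

Lemma projT_idem (a : int) : projT T (projT T a) = projT T a.
Proof. rewrite /projT; lia. Qed.

Lemma walk_step_dist (u : int) (y : bool) :
  projT T u = u -> `|walk_step u y - u| <= 1.
Proof. by rewrite /walk_step /projT; case: y => /=; lia. Qed.

Lemma foldl_walk_step_lipschitz (ys : seq bool) (u v : int) :
  `|foldl walk_step u ys - foldl walk_step v ys| <= `|u - v|.
Proof.
elim: ys u v => //= y ys IH u v; apply: le_trans (IH _ _) _.
rewrite /walk_step; set d := (_ - 1)%R.
have := projT_lipschitz (u + d) (v + d); lia.
Qed.

Lemma foldl_walk_step_projT (ys : seq bool) (u : int) :
  projT T u = u -> projT T (foldl walk_step u ys) = foldl walk_step u ys.
Proof. by elim: ys u => //= y ys IH u _; apply: IH; apply: projT_idem. Qed.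

Lemma walk_cat_cons (ys1 : seq bool) (y : bool) (ys2 : seq bool) :
  `|walk T (ys1 ++ y :: ys2) - walk T (ys1 ++ ys2)| <= 1.
Proof.
rewrite /walk -/walk_step !foldl_cat /=.
set u := foldl _ 0 ys1.
have u_in_range : projT T u = u by apply: foldl_walk_step_projT; rewrite /projT; lia.
apply: le_trans (foldl_walk_step_lipschitz _ _ _) _.
exact: walk_step_dist.
Qed.

End ProjectedWalk.

Section SortedPrefix.

Variable A : eqType.

Lemma subseq_size_succ (t s : seq A) :
  subseq t s -> size s = (size t).+1 ->
  exists s1 a s2, s = s1 ++ a :: s2 /\ t = s1 ++ s2.
Proof.
elim: s t => // y s IH [|z t] /=.
  by case: s {IH} => // _ _; exists [::], y, [::].
case: eqP => [-> sub_ts [size_s] | _ sub_zts [size_s]].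
  by have [s1 [a [s2 [-> ->]]]] := IH t sub_ts size_s; exists (y :: s1), a, s2.
exists [::], y, s; split=> //; apply/eqP.
by have [_ <-] := size_subseq_leqif sub_zts; rewrite /= size_s.
Qed.

Variables (leT : rel A) (leT_total : total leT) (leT_tr : transitive leT).

Lemma sort_cat_cons (s1 : seq A) (a : A) (s2 : seq A) :
  exists t1 b t2, sort leT (s1 ++ a :: s2) = t1 ++ b :: t2 /\
                  sort leT (s1 ++ s2) = t1 ++ t2.
Proof.
apply: subseq_size_succ; last by rewrite !size_sort !size_cat /= addnS.
apply: subseq_sort => //; rewrite subseq_cat2l; exact: subseq_cons.
Qed.

Lemma take_count_sorted (p : pred A) (s : seq A) :
  (forall a b, leT a b -> p b -> p a) -> sorted leT s ->
  take (count p s) s = [seq a <- s | p a].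
Proof.
move=> p_down; elim: s => //= a s IH sorted_as.
case: ifP => [_ | pa] /=; first by rewrite IH // (path_sorted sorted_as).
have no_p : ~~ has p s.
  apply/hasPn => b b_s; apply: contraFN pa; apply: p_down.
  by move/allP: (order_path_min leT_tr sorted_as); apply.
have -> : count p s = 0%N by apply/eqP; rewrite -leqn0 leqNgt -has_count.
by move: no_p; rewrite has_filter negbK => /eqP ->.
Qed.

End SortedPrefix.

Definition le_fst (p q : nat * bool) : bool := (p.1 <= q.1)%N.

Lemma le_fst_total : total le_fst.
Proof. by move=> ??; rewrite /le_fst leq_total. Qed.

Lemma le_fst_trans : transitive le_fst.
Proof. by move=> ???; rewrite /le_fst; apply: leq_trans. Qed.

Lemma epw_valueE T S x :
  epw_value T S x =
  walk T [seq p.2 | p <- sort le_fst [seq p <- S | (p.1 <= x)%N]].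
Proof.
have [tot tr] := (le_fst_total, le_fst_trans).
rewrite /epw_value /sorted_data -/le_fst -(count_sort le_fst).
rewrite (take_count_sorted tr) ?sort_sorted ?filter_sort //.
by move=> p q; apply: leq_trans.
Qed.

Lemma epw_value_cat_cons T x S1 (a : nat * bool) S2 :
  `|epw_value T (S1 ++ a :: S2) x - epw_value T (S1 ++ S2) x| <= 1.
Proof.
rewrite !epw_valueE !filter_cat /=; case: ifP => _; last by rewrite subrr.
have [t1 [b [t2 [-> ->]]]] :=
  sort_cat_cons le_fst_total le_fst_trans [seq p <- S1 | (p.1 <= x)%N] a
    [seq p <- S2 | (p.1 <= x)%N].
rewrite !map_cat /=; exact: walk_cat_cons.
Qed.

Lemma neighborsP (S S' : seq (nat * bool)) : neighbors S S' ->
  S = S' \/ exists S1 S2 a a', S = S1 ++ a :: S2 /\ S' = S1 ++ a' :: S2.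
Proof.
move=> [size_SS' [i eq_nth]]; set d := (0%N, false).
have [lt_iS | le_Si] := ltnP i (size S); last first.
  left; apply: (eq_from_nth (x0 := d)) => // j lt_jS.
  by apply: eq_nth; apply/eqP; lia.
right; exists (take i S), (drop i.+1 S), (nth d S i), (nth d S' i).
split; first by rewrite -drop_nth // cat_take_drop.
have -> : take i S = take i S'.
  apply: (eq_from_nth (x0 := d)); first by rewrite !size_take size_SS'.
  move=> j; rewrite size_take lt_iS => lt_ji.
  by rewrite !nth_take // eq_nth //; apply/eqP; lia.
have -> : drop i.+1 S = drop i.+1 S'.
  apply: (eq_from_nth (x0 := d)); first by rewrite !size_drop size_SS'.
  by move=> j _; rewrite !nth_drop eq_nth //; apply/eqP; lia.
by rewrite -drop_nth -?size_SS' // cat_take_drop.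
Qed.

Lemma epw_value_neighbors T x (S S' : seq (nat * bool)) : neighbors S S' ->
  `|epw_value T S x - epw_value T S' x| <= 2.
Proof.
case/neighborsP => [-> | [S1 [S2 [a [a' [-> ->]]]]]]; first by rewrite subrr.
have := epw_value_cat_cons T x S1 a S2; have := epw_value_cat_cons T x S1 a' S2.
lia.
Qed.

Section Logistic.

Variable R : realType.

Definition logistic (a : R) : R := expR a / (1 + expR a).

Lemma logisticN (a : R) : logistic (- a) = 1 - logistic a.
Proof.
rewrite /logistic expRN.
have ea_neq0 : expR a != 0 by rewrite gt_eqF ?expR_gt0.
have ea1_neq0 : 1 + expR a != 0 by rewrite gt_eqF // addr_gt0 ?expR_gt0.
by field; rewrite ea1_neq0 ea_neq0.
Qed.

Lemma logistic_le_expR (a a' d : R) :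
  `|a - a'| <= d -> logistic a <= expR d * logistic a'.
Proof.
move=> /[dup] /(le_trans (normr_ge0 _)) d_ge0 /ler_normlP [_ le_aa'd].
have A_gt0 := expR_gt0 a; have B_gt0 := expR_gt0 a'.
have A_le : expR a <= expR d * expR a' by rewrite -expRD ler_expR; lra.
have E_ge1 : 1 <= expR d by rewrite -expR0 ler_expR.
have AB_le : expR a * expR a' <= expR d * (expR a * expR a').
  by rewrite ler_peMl // mulr_ge0 // ltW.
rewrite /logistic mulrA ler_pdivrMr ?addr_gt0 // mulrAC.
(* A (1 + B) <= E B (1 + A) is the sum of A <= E B and A B <= E A B. *)
rewrite ler_pdivlMr ?addr_gt0 //; nra.
Qed.

End Logistic.

Lemma epw_probE (R : realType) T (eps : R) S x (b : bool) :
  let c := eps * (epw_value T S x)%:~R / 2 in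
  epw_prob T eps S x b = logistic (if b then c else - c).
Proof. by case: b; rewrite /epw_prob /= ?logisticN. Qed.

Lemma dist_scaled_half_le (R : realType) (eps : R) (v v' : int) :
  0 <= eps -> `|v - v'| <= 2 -> `|eps * v%:~R / 2 - eps * v'%:~R / 2| <= eps.
Proof.
move=> eps_ge0 dist_vv'.
have -> : eps * v%:~R / 2 - eps * v'%:~R / 2 = eps / 2 * (v - v')%:~R.
  by rewrite rmorphB /=; ring.
have : `|(v - v')%:~R : R| <= 2%:~R by rewrite -intr_norm ler_int.
rewrite normrM [`|eps / 2|]ger0_norm ?divr_ge0 // -[2%:~R]/(2 : R); nra.
Qed.

Theorem lemma23 (R : realType) (N n T : nat) (eps : R) :
  0 < eps ->
  forall (S S' : seq (nat * bool)) (x : nat) (b : bool),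
    dataset N n S -> dataset N n S' -> neighbors S S' ->
    (1 <= x <= N)%N ->
    epw_prob T eps S x b <= expR eps * epw_prob T eps S' x b.
Proof.
(* Privacy holds for all datasets and queries. *)
move=> eps_gt0 S S' x b _ _ nbSS' _.
rewrite !epw_probE; apply: logistic_le_expR.
have := dist_scaled_half_le (ltW eps_gt0) (epw_value_neighbors T x nbSS').
by case: b => //; rewrite -opprD normrN.
Qed.
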